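(* For all ordered graphs $G$ and $H$ there exists an integer $N_{G,H}$ such that $r_o(G,H)=r_o(G,H;N_{G,H})$.
   Context: An ordered graph $G$ on $n$ vertices has vertex set $[n]=\{1,\dots,n\}$ with the natural linear order. An ordered graph $G$ on $[n]$ is contained in an ordered graph $H$ on a linearly ordered vertex set if there is an injective map $f$ from $[n]$ to $V(H)$ with $f(i)<f(j)$ whenever $i<j$ and $f(i)f(j)\in E(H)$ whenever $ij\in E(G)$; such an image is an ordered copy of $G$. The ordered Ramsey number $r_<(G,H)$ is the least $N$ such that every red/blue coloring of the edges of the complete graph on $[N]$ contains an ordered red copy of $G$ or an ordered blue copy of $H$. The online ordered Ramsey game for $(G_1,G_2)$ is played by Builder and Painter on a linearly ordered vertex set. On each turn Builder selects a previously unselected pair of vertices (an edge) and Painter then colors it red or blue. Builder wins as soon as the colored edges contain an ordered red copy of $G_1$ or an ordered blue copy of $G_2$; Builder tries to minimize and Painter tries to maximize the number of turns. The online ordered Ramsey number $r_o(G_1,G_2)$ is the number of turns after which Builder wins under optimal play when the game is played on $\mathbb N$. For $N\ge r_<(G_1,G_2)$, the restricted number $r_o(G_1,G_2;N)$ is the number of turns after which Builder wins under optimal play when the game is played on the vertex set $[N]$. *)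

From mathcomp Require Import all_boot.
Set Implicit Arguments. Unset Strict Implicit. Unset Printing Implicit Defensive.

(* An ordered graph on [n] = {1,...,n}: its number of vertices and its edge
   relation; the edge ij (i < j) is present iff [oedge i j]. Only pairs
   1 <= i < j <= n are ever consulted. *)
Record ograph := OGraph { onv : nat; oedge : rel nat }.

Definition color := bool.
Definition red : color := true.
Definition blue : color := false.

(* A position of the game: the list of selected edges (u,v), u < v, with
   the colour Painter gave them. *)
Definition state := seq ((nat * nat) * color).

Definition contains_copy (V : pred nat) (s : state) (c : color) (G : ograph) : Prop :=
  exists f : nat -> nat,
    (forall i, 1 <= i <= onv G -> V (f i)) /\
    (forall i j, 1 <= i -> i < j -> j <= onv G -> f i < f j) /\
    (forall i j, 1 <= i -> i < j -> j <= onv G -> oedge G i j ->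
        ((f i, f j), c) \in s).

Definition builder_won (V : pred nat) (G1 G2 : ograph) (s : state) : Prop :=
  contains_copy V s red G1 \/ contains_copy V s blue G2.

(* [builder_wins V G1 G2 k s]: from position [s] of the online ordered Ramsey
   game for (G1,G2) on vertex set V, Builder can force a win within at most
   [k] further turns, whatever Painter does. *)
Inductive builder_wins (V : pred nat) (G1 G2 : ograph) : nat -> state -> Prop :=
  | bw_done k s : builder_won V G1 G2 s -> builder_wins V G1 G2 k s
  | bw_move k s u v :
      u < v -> V u -> V v -> (u, v) \notin map fst s ->
      builder_wins V G1 G2 k (((u, v), red) :: s) ->
      builder_wins V G1 G2 k (((u, v), blue) :: s) ->
      builder_wins V G1 G2 k.+1 s.

Definition online_value (V : pred nat) (G1 G2 : ograph) (k : nat) : Prop :=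
  builder_wins V G1 G2 k [::] /\ forall k', k' < k -> ~ builder_wins V G1 G2 k' [::].

Definition allV : pred nat := predT.
Definition segV (N : nat) : pred nat := fun v => (1 <= v) && (v <= N).

(* Every red/blue colouring of the complete graph on [N] contains a red
   ordered copy of G1 or a blue ordered copy of G2; by monotonicity this
   is equivalent to N >= r_<(G1,G2). A colouring is a function [col] giving
   the colour [col u v] of the edge uv, u < v. *)
Definition contains_copy_col (V : pred nat) (col : nat -> nat -> color)
    (c : color) (G : ograph) : Prop :=
  exists f : nat -> nat,
    (forall i, 1 <= i <= onv G -> V (f i)) /\
    (forall i j, 1 <= i -> i < j -> j <= onv G -> f i < f j) /\
    (forall i j, 1 <= i -> i < j -> j <= onv G -> oedge G i j ->
        col (f i) (f j) = c).

Definition ramsey_arrow (N : nat) (G1 G2 : ograph) : Prop :=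
  forall col : nat -> nat -> color,
    contains_copy_col (segV N) col red G1 \/ contains_copy_col (segV N) col blue G2.

From Stdlib Require Import Classical.
From mathcomp Require Import all_boot zify.
Set Implicit Arguments. Unset Strict Implicit. Unset Printing Implicit Defensive.

(* By the finite Ramsey theorem some N0 satisfies N0 -> (G, H); selecting all
   edges of [N0] then wins on N, so the online number k on N exists. A strategy
   winning in k turns on N is a finite tree and touches finitely many vertices;
   shifted by one (N contains 0, [N] does not) it wins in k turns on [N] for
   every large N. Conversely any strategy on [N] is one on N, so Builder cannot
   win faster on [N]. *)

Section SequenceRamsey.

Variables (T : eqType) (col : T -> T -> color).

Definition monochromatic (c : color) : pred (seq T) :=
  pairwise (fun x y => col x y == c).

Lemma monochromatic_cons c x S U :
  subseq U [seq y <- S | col x y == c] -> monochromatic c U ->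
  subseq (x :: U) (x :: S) /\ monochromatic c (x :: U).
Proof.
rewrite subseq_filter => /andP[colxU subUS] monoU.
by rewrite /monochromatic /= eqxx subUS colxU.
Qed.

End SequenceRamsey.

(* The first element of S sees either many red or many blue later elements;
   recurse into those (the bound R(a, b) <= R(a-1, b) + R(a, b-1) + 1). *)
Lemma ramsey_subseq a b : exists R, forall (T : eqType) (col : T -> T -> color) S,
  R <= size S -> exists2 U, subseq U S &
    (a <= size U /\ monochromatic col red U) \/ (b <= size U /\ monochromatic col blue U).
Proof.
elim: a b => [|a IHa] b.
  by exists 0 => T col S _; exists [::]; [exact: sub0seq | left].
elim: b => [|b IHb].
  by exists 0 => T col S _; exists [::]; [exact: sub0seq | right].
have [Rr HRr] := IHa b.+1; have [Rb HRb] := IHb.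
exists (Rr + Rb).+1 => T col [|x S] //= /ltnSE szS.
have subS c U : subseq U [seq y <- S | col x y == c] -> subseq U (x :: S).
  by move=> subU; apply: subseq_trans subU (subseq_trans (filter_subseq _ _) (subseq_cons _ _)).
have := count_predC (fun y => col x y == red) S.
have -> : count (predC (fun y => col x y == red)) S = count (fun y => col x y == blue) S.
  by apply: eq_count => y /=; case: (col x y).
move=> split_S.
have [manyr | manyb] : Rr <= count (fun y => col x y == red) S
                       \/ Rb <= count (fun y => col x y == blue) S by lia.
- rewrite -size_filter in manyr.
  have [U subU [[szU monoU] | blueU]] := HRr T col _ manyr; last first.
    by exists U; [exact: (subS red) | right].
  have [subxU monoxU] := monochromatic_cons subU monoU.
  by exists (x :: U) => //; left.
- rewrite -size_filter in manyb.
  have [U subU [redU | [szU monoU]]] := HRb T col _ manyb.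
    by exists U; [exact: (subS blue) | left].
  have [subxU monoxU] := monochromatic_cons subU monoU.
  by exists (x :: U) => //; right.
Qed.

Lemma contains_copy_col_monochromatic N col c (G : ograph) U :
  subseq U (iota 1 N) -> onv G <= size U -> monochromatic col c U ->
  contains_copy_col (segV N) col c G.
Proof.
move=> subU szU monoU.
have incrU : pairwise ltn U.
  rewrite -sorted_pairwise; last exact: ltn_trans.
  apply: (subseq_sorted ltn_trans subU); exact: iota_ltn_sorted.
have nthU i j : 1 <= i -> i < j -> j <= onv G ->
    nth 0 U i.-1 < nth 0 U j.-1 /\ col (nth 0 U i.-1) (nth 0 U j.-1) = c.
  move=> i1 ij jG; have iU : i.-1 < size U by lia.
  have jU : j.-1 < size U by lia.
  have ij' : i.-1 < j.-1 by lia.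
  by split; [exact: (pairwiseP 0 incrU) | apply/eqP; exact: (pairwiseP 0 monoU)].
exists (fun i => nth 0 U i.-1); split; [|split].
- move=> i /andP[i1 iG]; have /(mem_subseq subU) : nth 0 U i.-1 \in U by apply: mem_nth; lia.
  by rewrite mem_iota /segV; lia.
- by move=> i j i1 ij jG; case: (nthU i j i1 ij jG).
- by move=> i j i1 ij jG _; case: (nthU i j i1 ij jG).
Qed.

Lemma ramsey_arrow_exists (G H : ograph) : exists N, ramsey_arrow N G H.
Proof.
have [N HN] := ramsey_subseq (onv G) (onv H).
exists N => col; have [|U subU [[szU monoU] | [szU monoU]]] := HN _ col (iota 1 N).
- by rewrite size_iota.
- by left; exact: contains_copy_col_monochromatic monoU.
- by right; exact: contains_copy_col_monochromatic monoU.
Qed.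

Lemma contains_copy_col_subset (V W : pred nat) col c G : {subset V <= W} ->
  contains_copy_col V col c G -> contains_copy_col W col c G.
Proof. by move=> VW [f [fV ff]]; exists f; split=> // i /fV /VW. Qed.

Lemma ramsey_arrow_leq M N G H : M <= N -> ramsey_arrow M G H -> ramsey_arrow N G H.
Proof.
move=> MN arrM col; have segMN : {subset segV M <= segV N} by rewrite /segV => x /=; lia.
by case: (arrM col) => copy; [left | right]; exact: contains_copy_col_subset copy.
Qed.

Lemma contains_copy_subset_state V s s' c G : {subset s <= s'} ->
  contains_copy V s c G -> contains_copy V s' c G.
Proof. by move=> ss' [f [fV [ff fs]]]; exists f; do 2!split=> //; move=> i j *; apply/ss'/fs. Qed.

Lemma contains_copy_subset_vertices (V W : pred nat) s c G : {subset V <= W} ->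
  contains_copy V s c G -> contains_copy W s c G.
Proof. by move=> VW [f [fV ff]]; exists f; split=> // i /fV /VW. Qed.

Lemma builder_wins_subset_vertices (V W : pred nat) G H k s : {subset V <= W} ->
  builder_wins V G H k s -> builder_wins W G H k s.
Proof.
move=> VW; elim=> {k s} [k s won | k s u v uv Vu Vv fresh _ winr _ winb].
  by apply: bw_done; case: won => copy; [left | right]; exact: contains_copy_subset_vertices copy.
exact: bw_move uv (VW _ Vu) (VW _ Vv) fresh winr winb.
Qed.

Definition shift_state (s : state) : state := [seq ((e.1.1.+1, e.1.2.+1), e.2) | e <- s].

Lemma contains_copy_shift s c G : contains_copy allV s c G ->
  exists B, forall N, B <= N -> contains_copy (segV N) (shift_state s) c G.
Proof.
move=> [f [_ [ff fs]]]; exists (f (onv G)).+1 => N fN.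
exists (fun i => (f i).+1); split; [|split].
- move=> i /andP[i1 iG]; rewrite /segV /=.
  case: (ltngtP i (onv G)) => [iltG | | ->]; last lia; last lia.
  by have := ff i _ i1 iltG (leqnn _); lia.
- by move=> i j i1 ij jG; rewrite ltnS; exact: ff.
- by move=> i j i1 ij jG Gij; apply/mapP; exists ((f i, f j), c); first exact: fs.
Qed.

Lemma builder_wins_shift G H k s : builder_wins allV G H k s ->
  exists B, forall N, B <= N -> builder_wins (segV N) G H k (shift_state s).
Proof.
elim=> {k s} [k s [copy | copy] | k s u v uv _ _ fresh _ [Br winr] _ [Bb winb]].
- have [B HB] := contains_copy_shift copy.
  by exists B => N BN; apply: bw_done; left; exact: HB.
- have [B HB] := contains_copy_shift copy.
  by exists B => N BN; apply: bw_done; right; exact: HB.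
exists (maxn (maxn Br Bb) v.+1) => N BN.
apply: (@bw_move _ _ _ _ _ u.+1 v.+1) => //;
  [rewrite /segV; lia.. | | apply: winr; lia | apply: winb; lia].
move: fresh; apply: contra => /mapP[_ /mapP[[[x y] c] xys ->] /= [-> ->]].
by apply/mapP; exists ((x, y), c).
Qed.

Definition colored_edges (col : nat -> nat -> color) (L : seq (nat * nat)) : state :=
  [seq (e, col e.1 e.2) | e <- L].

(* Builder selects the edges of L in order; Painter's answers form a colouring. *)
Lemma builder_wins_play_edges (V : pred nat) G H (L : seq (nat * nat)) s : uniq L ->
  (forall e, e \in L -> [/\ e.1 < e.2, V e.1, V e.2 & e \notin map fst s]) ->
  (forall col, builder_won V G H (colored_edges col L ++ s)) ->
  builder_wins V G H (size L) s.
Proof.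
elim: L s => [|[u v] L IHL] s /=.
  by move=> _ _ won; apply: bw_done; exact: (won (fun _ _ => red)).
move=> /andP[uvL uniqL] legal won; have [uv Vu Vv fresh] := legal _ (mem_head _ _).
have win c : builder_wins V G H (size L) (((u, v), c) :: s).
  apply: IHL => // [e eL | col].
    have [e12 Ve1 Ve2 fresh_e] := legal e (mem_behead (s := (u, v) :: L) eL).
    split=> //; rewrite /= in_cons negb_or fresh_e andbT.
    by apply: contraNneq uvL => <-.
  pose col' x y := if (x, y) == (u, v) then c else col x y.
  have sub : {subset colored_edges col' ((u, v) :: L) ++ s
                <= colored_edges col L ++ ((u, v), c) :: s}.
    move=> x; rewrite /= in_cons !mem_cat in_cons => /orP[/eqP-> | /orP[/mapP[[a b] abL ->] | ->]].
    - by rewrite /col' !eqxx orbT.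
    - have ab_uv : (a, b) != (u, v) by apply: contraNneq uvL => <-.
      by rewrite /col' /= (negbTE ab_uv) (map_f (fun e => (e, col e.1 e.2)) abL).
    - by rewrite !orbT.
  by case: (won col') => copy; [left | right]; exact: contains_copy_subset_state copy.
exact: bw_move uv Vu Vv fresh (win red) (win blue).
Qed.

Definition complete_edges N : seq (nat * nat) :=
  [seq e <- [seq (x, y) | x <- iota 1 N, y <- iota 1 N] | e.1 < e.2].

Lemma builder_wins_ramsey_arrow N G H : ramsey_arrow N G H ->
  builder_wins (segV N) G H (size (complete_edges N)) [::].
Proof.
move=> arrN; apply: builder_wins_play_edges.
- rewrite filter_uniq // allpairs_uniq ?iota_uniq //.
  by move=> [a b] [c d] _ _ /= [-> ->].
- move=> e; rewrite mem_filter andbC => /andP[/allpairsP[[x y] [/= xN yN ->]] /= xy].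
  by move: xN yN; rewrite !mem_iota /segV /= => xN yN; split=> //; lia.
move=> col; rewrite cats0.
have copy c F : contains_copy_col (segV N) col c F ->
    contains_copy (segV N) (colored_edges col (complete_edges N)) c F.
  move=> [f [fV [ff fc]]]; exists f; do 2!split=> //; move=> i j i1 ij jF Fij.
  rewrite -(fc i j i1 ij jF Fij); apply: (map_f (fun e => (e, col e.1 e.2))).
  have /andP[fi1 fiN] : segV N (f i) by apply: fV; lia.
  have /andP[fj1 fjN] : segV N (f j) by apply: fV; lia.
  by rewrite mem_filter (ff i j i1 ij jF); apply: allpairs_f; rewrite mem_iota; lia.
by case: (arrN col) => copyc; [left | right]; exact: copy.
Qed.

Lemma ex_minimal (P : nat -> Prop) k : P k -> exists m, P m /\ forall j, j < m -> ~ P j.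
Proof.
elim/ltn_ind: k => k IHk Pk.
have [[j jk Pj] | noj] := classic (exists2 j, j < k & P j); first exact: IHk Pj.
by exists k; split=> // j jk Pj; apply: noj; exists j.
Qed.

Theorem lemma7 (G H : ograph) :
  exists N : nat, ramsey_arrow N G H /\
    exists k : nat, online_value allV G H k /\ online_value (segV N) G H k.
Proof.
have [R arrR] := ramsey_arrow_exists G H.
have [k [winN minimal]] : exists k, online_value allV G H k.
  by apply: ex_minimal; apply: builder_wins_subset_vertices (builder_wins_ramsey_arrow arrR).
have [B winB] := builder_wins_shift winN.
exists (maxn R B); split; first exact: ramsey_arrow_leq (leq_maxl _ _) arrR.
exists k; do 2!split=> //; first exact: winB (leq_maxr _ _).
move=> j jk win; apply: (minimal j jk).
by apply: builder_wins_subset_vertices win.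
Qed.
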